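(* Let $n,x$ be integers with $1<x<n$, so that $G=C_{2n}(x,1,n)$ is a $5$-regular circulant graph. If $n\equiv 0 \pmod 3$, $x\equiv 1\pmod 3$ and $x<\tfrac{n}{2}$, then $G$ is word-representable.
   Context: Two distinct letters $x,y$ alternate in a word $w$ if, after deleting all other letters from $w$, the resulting word is of the form $xyxy\cdots$ or $yxyx\cdots$ (of even or odd length). A graph $G=(V,E)$ is word-representable if there is a word $w$ over the alphabet $V$, containing every letter of $V$ at least once, such that for all distinct $x,y\in V$, $xy\in E$ if and only if $x$ and $y$ alternate in $w$. For an integer $m$ and a set $R$ of positive integers each at most $m/2$, the circulant graph $C_m(R)$ has vertex set $\{0,1,\dots,m-1\}$, with $i$ and $j$ adjacent iff $\min(|i-j|,\,m-|i-j|)\in R$. $C_{2n}(x,1,n)$ denotes the circulant graph on $2n$ vertices with jump set $\{1,x,n\}$; it is $5$-regular exactly when $1<x<n$. *)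

From mathcomp Require Import all_boot.
Set Implicit Arguments. Unset Strict Implicit. Unset Printing Implicit Defensive.

Definition restrict2 (T : eqType) (w : seq T) (x y : T) : seq T :=
  [seq z <- w | (z == x) || (z == y)].

Definition altword (T : Type) (a b : T) (k : nat) : seq T :=
  mkseq (fun i => if odd i then b else a) k.

Definition alternate (T : eqType) (w : seq T) (x y : T) : Prop :=
  let s := restrict2 w x y in
  s = altword x y (size s) \/ s = altword y x (size s).

Definition word_representable (V : finType) (adj : V -> V -> bool) : Prop :=
  exists w : seq V,
    (forall v : V, v \in w) /\
    (forall u v : V, u != v -> (adj u v <-> alternate w u v)).

Definition cdist (m i j : nat) : nat :=
  let d := if i <= j then j - i else i - j in minn d (m - d).

Definition circulant_adj (m : nat) (R : pred nat) (i j : 'I_m) : bool :=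
  R (cdist m i j).

Definition C2n_x1n (n x : nat) : 'I_(2 * n) -> 'I_(2 * n) -> bool :=
  @circulant_adj (2 * n) (fun d => [|| d == 1, d == x | d == n]).
Arguments C2n_x1n n x : clear implicits.
Arguments circulant_adj m R : clear implicits.

(* Colour vertex i of C_2n(x,1,n) by i mod 3 on [0, n), (i + 1) mod 3 on [n, n + x)
   and (i + 2) mod 3 on [n + x, 2n); since 3 | n and x = 1 (mod 3), every jump of
   length 1, x or n changes the colour, so the graph is 3-colourable.

   Every 3-colourable graph is word-representable.  For colour classes X, Y, Z and
   y in Y, the permutation  N_X(y) y (X \ N_X(y)) (Y \ y) Z  of the vertices puts y
   right after its neighbours of colour X.  The word is the concatenation of the
   three rounds (X, Y, Z) = (0, 1, 2), (1, 2, 0), (2, 0, 1), a round being these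
   permutations for all y in Y followed by the class X.  Restricted to two vertices
   u, v, a rotation of the word is a concatenation of blocks uv and vu, and
   alternation is invariant under rotation because u and v occur equally often.
   The blocks all agree iff u and v have different colours and are adjacent: a
   block vu comes from y = v not adjacent to u, or, for u and v of the same colour
   Y, from the permutations at y = u and y = v, which give uv and vu. *)

From mathcomp Require Import all_boot zify.
Set Implicit Arguments. Unset Strict Implicit. Unset Printing Implicit Defensive.

Notation alternating := (sorted (fun a b => a != b)).

Lemma constant_mem (S : eqType) (x : S) t : x \in t -> constant t = all (pred1 x) t.
Proof.
move=> xt; apply/idP/idP => [/(constantP x) [y Et]|]; last exact: all_pred1_constant.
by move: xt; rewrite Et mem_nseq => /andP[_ /eqP->]; apply: all_pred1_nseq.
Qed.

Section Alternation.

Variable T : eqType.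
Implicit Types (a b u v : T) (s w : seq T).

Local Notation neq := (fun a b : T => a != b).

Lemma subset_pair_cons a b c s :
  {subset c :: s <= [:: a; b]} -> {subset s <= [:: b; a]}.
Proof. by move=> sub z zs; have := sub z; rewrite !inE zs orbT orbC; apply. Qed.

Lemma altwordS a b k : altword a b k.+1 = a :: altword b a k.
Proof.
rewrite /altword /mkseq /= -[1]addn0 iotaDl -map_comp; congr (_ :: _).
by apply: eq_map => i /=; rewrite add0n; case: (odd i).
Qed.

Lemma alternating_altword a b k : a != b -> alternating (altword a b k).
Proof.
elim: k a b => [|[|k] IHk] a b ab //; rewrite !altwordS /= ab.
by have := IHk b a; rewrite eq_sym ab altwordS; apply.
Qed.

Lemma altword_path a b s : a != b -> {subset s <= [:: a; b]} ->
  path neq a s -> a :: s = altword a b (size s).+1.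
Proof.
elim: s a b => [|c s IHs] a b ab sub_s; first by rewrite altwordS.
rewrite /= => /andP[ac path_s].
have cb : c = b by move: (sub_s c (mem_head c s)); rewrite !inE eq_sym (negbTE ac) => /eqP.
by rewrite cb in path_s sub_s *; rewrite [RHS]altwordS (IHs b a) 1?eq_sym //;
  apply: subset_pair_cons sub_s.
Qed.

Lemma restrict2C w u v : restrict2 w u v = restrict2 w v u.
Proof. by apply: eq_filter => z; rewrite orbC. Qed.

Lemma restrict2_sub w u v : {subset restrict2 w u v <= [:: u; v]}.
Proof. by move=> z; rewrite mem_filter !inE => /andP[]. Qed.

Lemma alternateE w u v : u != v ->
  alternate w u v <-> alternating (restrict2 w u v).
Proof.
move=> uv; split; first by case=> ->; apply: alternating_altword; rewrite // eq_sym.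
rewrite /alternate; have := @restrict2_sub w u v.
case: (restrict2 w u v) => [_ _|z s sub_zs]; first by left.
move: (sub_zs z (mem_head z s)); rewrite !inE => /orP[]/eqP-> /= path_s.
  left; apply: altword_path => // z' zs'.
  by apply: sub_zs; rewrite inE zs' orbT.
by right; apply: altword_path (subset_pair_cons sub_zs) _; rewrite // eq_sym.
Qed.

Lemma path_neq_count a b s : a != b -> {subset s <= [:: a; b]} -> path neq a s ->
  count_mem a (a :: s) = count_mem b (a :: s) + (last a s == a).
Proof.
elim: s a b => [|c s IHs] a b ab sub_s /=; first by rewrite eqxx (negbTE ab).
case/andP=> ac path_s.
have cb : c = b by move: (sub_s c (mem_head c s)); rewrite !inE eq_sym (negbTE ac) => /eqP.
subst c; have sub_s' := subset_pair_cons sub_s.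
have := IHs b a; rewrite eq_sym ab => /(_ isT sub_s' path_s) /= ->.
have : last b s \in [:: b; a].
  by case/predU1P: (mem_last b s) => [->|/sub_s' //]; rewrite mem_head.
have ba : (b == a) = false by rewrite eq_sym (negbTE ab).
rewrite eqxx (negbTE ab) ba !inE.
by case/orP=> /eqP->; rewrite eqxx ?(negbTE ab) ?ba /=; lia.
Qed.

Lemma alternating_cycle u v s : u != v -> {subset s <= [:: u; v]} ->
  count_mem u s = count_mem v s -> alternating s = cycle neq s.
Proof.
case: s => [//|a s] uv sub_s count_uv /=; rewrite rcons_path.
apply/idP/idP => [path_s|/andP[] //]; rewrite path_s /=.
have [b ab [sub_s' count_ab]] : exists2 b, a != b &
    {subset s <= [:: a; b]} /\ count_mem a (a :: s) = count_mem b (a :: s).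
  move: (sub_s a (mem_head a s)); rewrite !inE => /orP[]/eqP ea; subst a.
    by exists v => //; split => // z zs; apply: sub_s; rewrite inE zs orbT.
  by exists u; [rewrite eq_sym | split; [apply: subset_pair_cons sub_s|]].
have := path_neq_count ab sub_s' path_s; rewrite count_ab.
by move/eqP; rewrite -{1}[count_mem b _]addn0 eqn_add2l; case: (_ == a).
Qed.

Lemma alternating_catC u v s1 s2 : u != v -> {subset s1 ++ s2 <= [:: u; v]} ->
  count_mem u (s1 ++ s2) = count_mem v (s1 ++ s2) ->
  alternating (s2 ++ s1) = alternating (s1 ++ s2).
Proof.
move=> uv sub_s count_uv.
have perm_s : perm_eq (s2 ++ s1) (s1 ++ s2) by rewrite perm_catC.
rewrite !(alternating_cycle uv) 1?(cycle_catC neq) //.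
  by move=> z; rewrite (perm_mem perm_s) => /sub_s.
by move/permP: perm_s => count_s; rewrite !count_s.
Qed.

Lemma alternating_flatten_pairs u v (bs : seq (seq T)) : u != v ->
  all (mem [:: [:: u; v]; [:: v; u]]) bs -> alternating (flatten bs) = constant bs.
Proof.
move=> uv; elim: bs => [//|b [|b' bs] IHbs] /= /andP[b_uv bs_uv].
  by move: b_uv; rewrite !inE => /orP[]/eqP->; rewrite /= ?andbT // eq_sym.
move: b_uv bs_uv (IHbs bs_uv); rewrite !inE.
have vu : v != u by rewrite eq_sym.
case/orP=> /eqP-> /andP[/orP[]/eqP-> _] /= ->;
  by rewrite ?eqxx ?uv ?vu ?eqseq_cons ?(negbTE uv) ?(negbTE vu).
Qed.

Lemma count_flatten_pairs u v (bs : seq (seq T)) :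
  all (mem [:: [:: u; v]; [:: v; u]]) bs ->
  count_mem u (flatten bs) = count_mem v (flatten bs).
Proof.
elim: bs => //= b bs IHbs /andP[b_uv /IHbs]; rewrite !count_cat => ->.
move: b_uv; rewrite !inE => /orP[]/eqP-> /=;
  by rewrite !eqxx [v == u]eq_sym !addn0; congr (_ + _); apply: addnC.
Qed.

Lemma restrict2_cat s1 s2 u v :
  restrict2 (s1 ++ s2) u v = restrict2 s1 u v ++ restrict2 s2 u v.
Proof. exact: filter_cat. Qed.

Lemma restrict2_flatten (I : Type) (f : I -> seq T) (s : seq I) u v :
  restrict2 (flatten [seq f y | y <- s]) u v = flatten [seq restrict2 (f y) u v | y <- s].
Proof. by rewrite /restrict2 filter_flatten -map_comp. Qed.

Lemma restrict2_flatten_const (I : eqType) (f : I -> seq T) (s : seq I) u v c :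
  {in s, forall y, restrict2 (f y) u v = c} ->
  restrict2 (flatten [seq f y | y <- s]) u v = flatten (nseq (size s) c).
Proof.
elim: s => //= y s IHs fc; rewrite restrict2_cat fc ?mem_head // IHs // => z zs.
by apply: fc; rewrite inE zs orbT.
Qed.

Lemma flatten_nseq_swap a b k t :
  a :: flatten (nseq k [:: b; a]) ++ b :: t = flatten (nseq k.+1 [:: a; b]) ++ t.
Proof. by elim: k => //= k ->. Qed.

Lemma restrict2_filter (P : pred T) w u v :
  restrict2 [seq z <- w | P z] u v = [seq z <- restrict2 w u v | P z].
Proof. by rewrite /restrict2 -!filter_predI; apply: eq_filter => z /=; rewrite andbC. Qed.

End Alternation.

Section ThreeColouring.

Variables (V : finType) (adj : rel V) (col : V -> nat).

Definition colour_class k := [seq z <- enum V | col z == k].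

Definition pivot_perm X Y Z y :=
  [seq z <- colour_class X | adj z y] ++ y :: [seq z <- colour_class X | ~~ adj z y] ++
  [seq z <- colour_class Y | y != z] ++ colour_class Z.

Definition pivot_round X Y Z :=
  flatten [seq pivot_perm X Y Z y | y <- colour_class Y] ++ colour_class X.

Definition three_colour_word := pivot_round 0 1 2 ++ pivot_round 1 2 0 ++ pivot_round 2 0 1.

Lemma mem_colour_class k z : (z \in colour_class k) = (col z == k).
Proof. by rewrite mem_filter mem_enum andbT. Qed.

Lemma restrict2_enum (u v : V) : u != v ->
  restrict2 (enum V) u v \in [:: [:: u; v]; [:: v; u]].
Proof.
move=> uv; set s := restrict2 (enum V) u v.
have mem_s : s =i [:: u; v] by move=> z; rewrite mem_filter mem_enum !inE andbT.
have uniq_s : uniq s by rewrite filter_uniq ?enum_uniq.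
have /perm_size : perm_eq s [:: u; v] by rewrite uniq_perm //= inE uv.
move: uniq_s mem_s; case: s => [|a [|b []]] //=; rewrite inE andbT => ab mem_ab _.
move: (mem_ab a) (mem_ab b) ab; rewrite !inE !eqxx ?orbT /=.
by move=> /esym/orP[]/eqP-> /esym/orP[]/eqP->; rewrite ?eqxx ?orbT.
Qed.

Lemma neq_colour a b : col a != col b -> a != b.
Proof. by apply: contraNneq => ->. Qed.

Lemma restrict2_colour_class_neq k u v : col u != col v ->
  restrict2 (colour_class k) u v =
  (if col u == k then [:: u] else [::]) ++ (if col v == k then [:: v] else [::]).
Proof.
move=> cuv; rewrite restrict2_filter; move: (restrict2_enum (neq_colour cuv)).
rewrite !inE => /orP[]/eqP-> /=; case: eqP => [<-|_]; case: eqP => // /eqP.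
by rewrite (negbTE cuv).
Qed.

Lemma restrict2_colour_class k u v :
  restrict2 (colour_class k) u v = [seq z <- restrict2 (enum V) u v | col z == k].
Proof. exact: restrict2_filter. Qed.

Section Pivot.

Variables X Y Z : nat.
Hypothesis XYZ : uniq [:: X; Y; Z].

Let colours_neq : ((X == Y) = false) * ((Y == X) = false) * ((Y == Z) = false) *
  ((Z == Y) = false) * ((X == Z) = false) * ((Z == X) = false).
Proof.
move: XYZ; rewrite /= !inE !negb_or andbT => /andP[/andP[XY XZ] YZ].
by rewrite [Y == X]eq_sym [Z == Y]eq_sym [Z == X]eq_sym (negbTE XY) (negbTE YZ) (negbTE XZ).
Qed.

Lemma restrict2_pivot_XY u v y : col u = X -> col v = Y -> col y = Y ->
  restrict2 (pivot_perm X Y Z y) u v =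
  if adj u v || (y != v) then [:: u; v] else [:: v; u].
Proof.
move=> cu cv cy; have uv : u != v by apply: neq_colour; rewrite cu cv colours_neq.
have yu : (y == u) = false by apply/negbTE/neq_colour; rewrite cu cy colours_neq.
rewrite /pivot_perm -cat1s !restrict2_cat !(restrict2_filter _ (colour_class _)).
rewrite !restrict2_colour_class.
move: (restrict2_enum uv); rewrite !inE => /orP[]/eqP-> /=;
  rewrite cu cv yu !colours_neq !eqxx /=;
  by case: (eqVneq y v) => [->|yv]; case: (adj u _); rewrite /= ?eqxx ?orbT.
Qed.

Lemma restrict2_pivot_XZ u v y : col u = X -> col v = Z -> col y = Y ->
  restrict2 (pivot_perm X Y Z y) u v = [:: u; v].
Proof.
move=> cu cv cy; have uv : u != v by apply: neq_colour; rewrite cu cv colours_neq.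
have yu : (y == u) = false by apply/negbTE/neq_colour; rewrite cu cy colours_neq.
have yv : (y == v) = false by apply/negbTE/neq_colour; rewrite cv cy colours_neq.
rewrite /pivot_perm -cat1s !restrict2_cat !(restrict2_filter _ (colour_class _)).
rewrite !restrict2_colour_class.
move: (restrict2_enum uv); rewrite !inE => /orP[]/eqP-> /=;
  rewrite cu cv yu yv !colours_neq !eqxx /=;
  by case: (adj u y).
Qed.

Lemma restrict2_pivot_YZ u v y : col u = Y -> col v = Z -> col y = Y ->
  restrict2 (pivot_perm X Y Z y) u v = [:: u; v].
Proof.
move=> cu cv cy; have uv : u != v by apply: neq_colour; rewrite cu cv colours_neq.
have yv : (y == v) = false by apply/negbTE/neq_colour; rewrite cv cy colours_neq.
rewrite /pivot_perm -cat1s !restrict2_cat !(restrict2_filter _ (colour_class _)).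
rewrite !restrict2_colour_class.
move: (restrict2_enum uv); rewrite !inE => /orP[]/eqP-> /=;
  rewrite cu cv yv !colours_neq !eqxx /=;
  by case: (eqVneq y u) => [->|yu]; rewrite ?eqxx.
Qed.

Lemma restrict2_pivot_YY u v y : u != v -> col u = Y -> col v = Y -> col y = Y ->
  restrict2 (pivot_perm X Y Z y) u v =
  if y == u then [:: u; v] else if y == v then [:: v; u] else restrict2 (enum V) u v.
Proof.
move=> uv cu cv cy; have vu : (v == u) = false by rewrite eq_sym (negbTE uv).
rewrite /pivot_perm -cat1s !restrict2_cat !(restrict2_filter _ (colour_class _)).
rewrite !restrict2_colour_class.
case: (eqVneq y u) => [->|yu]; [|case: (eqVneq y v) => [->|yv]];
  move: (restrict2_enum uv); rewrite !inE => /orP[]/eqP-> /=;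
  rewrite cu cv !colours_neq ?eqxx /= ?(eqxx u) ?(eqxx v) ?vu ?(negbTE uv) //=;
  by rewrite (negbTE yu) (negbTE yv).
Qed.

Lemma restrict2_round_XY u v : col u = X -> col v = Y ->
  restrict2 (pivot_round X Y Z) u v =
  flatten [seq if adj u v || (y != v) then [:: u; v] else [:: v; u] | y <- colour_class Y]
    ++ [:: u].
Proof.
move=> cu cv; rewrite restrict2_cat restrict2_flatten restrict2_colour_class_neq;
  last by rewrite cu cv colours_neq.
rewrite cu cv eqxx colours_neq; congr (flatten _ ++ _); apply/eq_in_map => y.
by rewrite mem_colour_class => /eqP; apply: restrict2_pivot_XY.
Qed.

Lemma restrict2_round_ZX a b : col a = Z -> col b = X ->
  restrict2 (pivot_round X Y Z) a b =
  flatten (nseq (size (colour_class Y)) [:: b; a]) ++ [:: b].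
Proof.
move=> ca cb; rewrite restrict2_cat restrict2_colour_class_neq;
  last by rewrite ca cb colours_neq.
rewrite ca cb eqxx colours_neq restrict2C (restrict2_flatten_const (c := [:: b; a])) //.
by move=> y; rewrite mem_colour_class => /eqP; apply: restrict2_pivot_XZ.
Qed.

Lemma restrict2_round_YZ a b : col a = Y -> col b = Z ->
  restrict2 (pivot_round X Y Z) a b = flatten (nseq (size (colour_class Y)) [:: a; b]).
Proof.
move=> ca cb; rewrite restrict2_cat restrict2_colour_class_neq;
  last by rewrite ca cb colours_neq.
rewrite ca cb !colours_neq (restrict2_flatten_const (c := [:: a; b])) ?cats0 //.
by move=> y; rewrite mem_colour_class => /eqP; apply: restrict2_pivot_YZ.
Qed.

Lemma not_alternating_same_colour u v s1 s2 : u != v -> col u = Y -> col v = Y ->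
  ~~ alternating (restrict2 (s1 ++ pivot_round X Y Z ++ s2) u v).
Proof.
move=> uv cu cv; set bs := [seq restrict2 (pivot_perm X Y Z y) u v | y <- colour_class Y].
have Yu : u \in colour_class Y by rewrite mem_colour_class cu.
have Yv : v \in colour_class Y by rewrite mem_colour_class cv.
have bs_uv : all (mem [:: [:: u; v]; [:: v; u]]) bs.
  apply/allP => b /mapP[y]; rewrite mem_colour_class => /eqP cy ->.
  rewrite restrict2_pivot_YY //; case: eqP => _; [|case: eqP => _].
  - by rewrite !inE; apply/orP; left.
  - by rewrite !inE; apply/orP; right.
  - exact: restrict2_enum.
apply/negP; rewrite !restrict2_cat restrict2_flatten -/bs -catA.
move/(infix_sorted (infix_infix _ _ _)); rewrite (alternating_flatten_pairs uv bs_uv).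
have Buv : [:: u; v] \in bs by apply/mapP; exists u; rewrite // restrict2_pivot_YY ?eqxx.
have Bvu : [:: v; u] \in bs.
  by apply/mapP; exists v; rewrite // restrict2_pivot_YY // eq_sym (negbTE uv) eqxx.
rewrite (constant_mem Buv) => /allP /(_ _ Bvu) /eqP [vu _].
by rewrite vu eqxx in uv.
Qed.

End Pivot.

Section Rounds.

Variables X Y Z : nat.
Hypothesis XYZ : uniq [:: X; Y; Z].

Lemma alternating_rounds u v s1 s2 : col u = X -> col v = Y ->
  s2 ++ s1 = pivot_round X Y Z ++ pivot_round Y Z X ++ pivot_round Z X Y ->
  alternating (restrict2 (s1 ++ s2) u v) = adj u v.
Proof.
move=> cu cv Es.
have YZX : uniq [:: Y; Z; X] by rewrite -(rot_uniq 2).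
have ZXY : uniq [:: Z; X; Y] by rewrite -(rot_uniq 1).
have uv : u != v.
  by apply: neq_colour; rewrite cu cv; move: XYZ; rewrite /= inE => /andP[/norP[]].
pose b y := if adj u v || (y != v) then [:: u; v] else [:: v; u].
set bs := [seq b y | y <- colour_class Y] ++
  nseq (size (colour_class Z)).+1 [:: u; v] ++ nseq (size (colour_class X)) [:: u; v].
have Er : restrict2 (s2 ++ s1) u v = flatten bs.
  rewrite Es !(restrict2_cat (pivot_round _ _ _)) restrict2_round_XY //.
  rewrite restrict2_round_ZX // restrict2_round_YZ //.
  by rewrite /bs !flatten_cat -!catA !cat1s flatten_nseq_swap.
have bs_uv : all (mem [:: [:: u; v]; [:: v; u]]) bs.
  apply/allP => c; rewrite !mem_cat => /or3P[/mapP[y _ ->] | /nseqP[-> _] | /nseqP[-> _]].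
  - by rewrite inE /b; case: ifP => _; rewrite !inE eqxx ?orbT.
  - by rewrite inE mem_head.
  - by rewrite inE mem_head.
have Buv : [:: u; v] \in bs by rewrite !mem_cat mem_nseq eqxx orbT.
rewrite restrict2_cat (alternating_catC uv) -restrict2_cat ?Er; last first.
- exact: count_flatten_pairs bs_uv.
- by rewrite -Er; apply: restrict2_sub.
rewrite (alternating_flatten_pairs uv bs_uv) (constant_mem Buv).
rewrite !all_cat !all_pred1_nseq !andbT all_map /b; case: (adj u v) => /=.
  by apply/allP => y _ /=.
apply/negbTE/allPn; exists v; first by rewrite mem_colour_class cv.
by rewrite /= eqxx /= eqseq_cons eq_sym (negbTE uv).
Qed.

End Rounds.

Lemma three_colour_word_next u v : col u < 3 -> col v = (col u).+1 %% 3 ->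
  alternating (restrict2 three_colour_word u v) = adj u v.
Proof.
rewrite /three_colour_word; case cu: (col u) => [|[|[|]]] // _ cv.
- by apply: (@alternating_rounds 0 1 2 isT u v [::]); rewrite ?cats0.
- apply: (@alternating_rounds 1 2 0 isT u v (pivot_round 0 1 2)) => //.
  exact: esym (catA _ _ _).
- by rewrite catA; apply: (@alternating_rounds 2 0 1 isT).
Qed.

Lemma three_colour_word_same u v : u != v -> col u < 3 -> col u = col v ->
  ~~ alternating (restrict2 three_colour_word u v).
Proof.
move=> uv; rewrite /three_colour_word; case cu: (col u) => [|[|[|]]] // _ /esym cv.
- by rewrite catA -[pivot_round 2 0 1]cats0; apply: (@not_alternating_same_colour 2 0 1 isT).
- by apply: (@not_alternating_same_colour 0 1 2 isT u v [::]).
- by apply: (@not_alternating_same_colour 1 2 0 isT u v (pivot_round 0 1 2)).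
Qed.

Lemma three_colourable_word_representable :
  symmetric adj -> (forall a b, adj a b -> col a != col b) -> (forall a, col a < 3) ->
  word_representable adj.
Proof.
move=> adjC proper col3; exists three_colour_word; split.
  move=> v; have : v \in colour_class (col v) by rewrite mem_colour_class.
  rewrite /three_colour_word /pivot_round !mem_cat; move: (col3 v).
  by case: (col v) => [|[|[|]]] // _ ->; rewrite !orbT.
move=> u v uv; rewrite alternateE //.
case: (eqVneq (col u) (col v)) => [same | diff].
  have /negbTE-> : ~~ adj u v by apply/negP => /proper; rewrite same eqxx.
  split=> // alt; move: (three_colour_word_same uv (col3 u) same).
  by rewrite alt.
have [next | prev] : col v = (col u).+1 %% 3 \/ col u = (col v).+1 %% 3.
  by move: (col3 u) (col3 v) diff; lia.
- by rewrite three_colour_word_next.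
- by rewrite adjC restrict2C three_colour_word_next.
Qed.

End ThreeColouring.

Definition circulant_colour n x i :=
  if i < n then i %% 3 else if i < n + x then i.+1 %% 3 else i.+2 %% 3.

Lemma circulant_colour_lt3 n x i : circulant_colour n x i < 3.
Proof. by rewrite /circulant_colour; case: ifP => _; [|case: ifP => _]; rewrite ltn_mod. Qed.

Lemma cdistC m i j : cdist m i j = cdist m j i.
Proof. by rewrite /cdist; case: (leqP i j) => h1; case: (leqP j i) => h2 //; lia. Qed.

Lemma circulant_colour_proper n x a b :
  1 < x -> x < n -> n %% 3 = 0 -> x %% 3 = 1 -> 2 * x < n -> a < 2 * n -> b < 2 * n ->
  [|| cdist (2 * n) a b == 1, cdist (2 * n) a b == x | cdist (2 * n) a b == n] ->
  circulant_colour n x a != circulant_colour n x b.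
Proof.
move=> x_gt1 x_ltn n3 x3 x_half a_lt b_lt; rewrite /cdist /circulant_colour.
case: (leqP a b) => ab; case: (ltnP a n) => an; case: (ltnP b n) => bn;
  try case: (ltnP a (n + x)) => anx; try case: (ltnP b (n + x)) => bnx;
  move=> adj_ab; apply/eqP => same; move: adj_ab; lia.
Qed.

Theorem theorem23 (n x : nat) :
  1 < x -> x < n ->
  n %% 3 = 0 -> x %% 3 = 1 -> 2 * x < n ->
  word_representable (C2n_x1n n x).
Proof.
move=> x_gt1 x_ltn n3 x3 x_half.
apply: (@three_colourable_word_representable _ _ (fun i : 'I_(2 * n) => circulant_colour n x i)).
- by move=> a b; rewrite /C2n_x1n /circulant_adj cdistC.
- by move=> a b; apply: circulant_colour_proper.
- by move=> a; apply: circulant_colour_lt3.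
Qed.
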